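(* Let $m\ge2$, $k\ge2$. (1) For every irreducible $(\mathbf T,\sigma)\in\mathcal C(m)$, \[ km-|\mathbf T|+\frac{a(\sigma)}2\ge m . \] (2) If $(\mathbf T,\sigma)\in\mathcal C(m)$ is irreducible but not circle-like and $km-|\mathbf T|+\frac{a(\sigma)}2=m$, then the cycle decomposition of $\sigma$ contains at least one cycle of length at least $3$.
   Context: $[p]=\{1,\dots,p\}$. $S(m,k)$ is the set of equivalence classes (under permutations of $[km]$ applied entrywise; a representative fixed in each class) of $\mathbf T=(T_1,\dots,T_m)$, $T_i=(T_{i,1},\dots,T_{i,k})\in[km]^k$ with pairwise distinct entries; $\mathrm{Range}(\mathbf T)=\{T_{i,j}\}$, $|\mathbf T|=|\mathrm{Range}(\mathbf T)|$. For $\sigma$ a permutation of $\mathrm{Range}(\mathbf T)$, $a(\sigma)=\#\{q:\sigma(q)\ne q\}$. The $(\mathbf T,\sigma)$-graph has vertices $(i,j)$, $i\in[m],j\in[k]$; black edges $(i,j)$–$(i,j+1)$; solid red edges between distinct $(i,j),(i',j')$ with $T_{i,j}=T_{i',j'}$; dotted red edges between $(i,j),(i',j')$ with $T_{i,j}\ne T_{i',j'}$ and $\sigma(T_{i,j})=T_{i',j'}$ or $\sigma(T_{i',j'})=T_{i,j}$. $\mathcal C(m)$: pairs with $\mathbf T\in S(m,k)$ and connected graph. $T_{i,j}$ is a connection point if $\sigma(T_{i,j})\notin T_i$ or $T_{i,j}\in T_{i'}$ for some $i'\ne i$. $(\mathbf T,\sigma)$ is reducible if its graph is connected and there are $i,j$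 with $T_{i,j}$ the only connection point in $T_i$ and $\sigma(x)=x$ for all entries $x\ne T_{i,j}$ of $T_i$; irreducible = connected and not reducible. An irreducible pair is circle-like if for each $i\in[m]$ there are exactly two distinct $i_1,i_2\in[k]$ such that each of $(i,i_1),(i,i_2)$ has exactly one red edge and that edge goes to some $(i',j')$ with $i'\ne i$, and all other vertices have no red edges. *)

From HB Require Import structures.
From mathcomp Require Import all_boot all_order all_algebra all_fingroup.
Set Implicit Arguments. Unset Strict Implicit. Unset Printing Implicit Defensive.

(* Indices are 0-based: [p] is rendered as 'I_p.  A tuple T = (T_1..T_m),
   T_i in [km]^k, is a function T : 'I_m -> 'I_k -> 'I_(k*m); the entries of
   each T_i are pairwise distinct (row_inj).  sigma, a permutation of Range T,
   is a {perm 'I_(k*m)} supported on Range T (perm_on). *)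

Section Defs.
Variables (m k : nat).
Implicit Types (T : 'I_m -> 'I_k -> 'I_(k * m)) (s : {perm 'I_(k * m)}).

Definition vert := ('I_m * 'I_k)%type.

Definition row_inj T := forall i, injective (T i).

Definition Range T : {set 'I_(k * m)} := [set T i j | i : 'I_m, j : 'I_k].

Definition sizeT T : nat := #|Range T|.

Definition amov s : nat := #|[set q in 'I_(k * m) | s q != q]|.

Definition Tv T (v : vert) := T v.1 v.2.

Definition black_edge (v w : vert) : bool :=
  (v.1 == w.1) && (((v.2 : nat).+1 == w.2) || ((w.2 : nat).+1 == v.2)).

Definition solid_edge T (v w : vert) : bool :=
  (v != w) && (Tv T v == Tv T w).

Definition dotted_edge T s (v w : vert) : bool :=
  (Tv T v != Tv T w) && ((s (Tv T v) == Tv T w) || (s (Tv T w) == Tv T v)).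

Definition red_edge T s (v w : vert) : bool :=
  solid_edge T v w || dotted_edge T s v w.

Definition graph_edge T s (v w : vert) : bool :=
  black_edge v w || red_edge T s v w.

Definition graph_connected T s : Prop :=
  forall v w : vert, connect (graph_edge T s) v w.

Definition inC T s : Prop :=
  row_inj T /\ perm_on (Range T) s /\ graph_connected T s.

Definition rowset T (i : 'I_m) : {set 'I_(k * m)} := [set T i j | j : 'I_k].

Definition connection_point T s (i : 'I_m) (j : 'I_k) : bool :=
  (s (T i j) \notin rowset T i) ||
  [exists i' : 'I_m, (i' != i) && (T i j \in rowset T i')].

Definition reducible T s : Prop :=
  graph_connected T s /\
  exists (i : 'I_m) (j : 'I_k),
    [/\ connection_point T s i j,
        (forall j' : 'I_k, connection_point T s i j' -> T i j' = T i j) &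
        (forall x, x \in rowset T i -> x != T i j -> s x = x)].

Definition irreducible T s : Prop := graph_connected T s /\ ~ reducible T s.

Definition red_deg T s (v : vert) : nat := #|[set w | red_edge T s v w]|.

Definition outer_red T s (i : 'I_m) (j : 'I_k) : bool :=
  (red_deg T s (i, j) == 1) &&
  [forall w : vert, red_edge T s (i, j) w ==> (w.1 != i)].

Definition circle_like T s : Prop :=
  irreducible T s /\
  forall i : 'I_m,
    #|[set j | outer_red T s i j]| = 2 /\
    (forall j : 'I_k, ~~ outer_red T s i j -> red_deg T s (i, j) = 0).

End Defs.

From mathcomp Require Import all_boot all_order all_algebra all_fingroup.
From mathcomp Require Import zify lra.
Set Implicit Arguments. Unset Strict Implicit. Unset Printing Implicit Defensive.

(* Call a vertex (i, j) active when T_{i,j} is a connection point or is moved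
   by sigma.  Connectivity and m >= 2 give every row a connection point, so in
   an irreducible pair every row has at least two active vertices: at least 2m
   in all.  Grouping the vertices by their value x, with d(x) occurrences, at
   most 2 d(x) + [sigma x != x] - 2 of them are active, because a value that
   occurs once and is fixed by sigma is never active; summing over Range T,
   #active + 2|T| <= 2km + a(sigma), which gives (1).  If (1) is an equality
   then every row has exactly two active vertices, every value occurs at most
   twice and every moved value once.  If sigma is moreover an involution, the
   active vertices are exactly those with a single red edge, going to another
   row, and the inactive ones have no red edge: the pair is circle-like. *)

Lemma connect_forward_closed (V : finType) (e : rel V) (P : pred V) x y :
  (forall u v, e u v -> P u -> P v) -> connect e x y -> P x -> P y.
Proof.
move=> eP /connectP[p ep ->]; elim: p x ep => [|z p IHp] x //= /andP[exz pz] Px.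
exact: IHp pz (eP _ _ exz Px).
Qed.

Lemma card_le2_mem (V : finType) (A : {set V}) a b c :
  #|A| <= 2 -> a \in A -> b \in A -> a != b -> c \in A -> c = a \/ c = b.
Proof.
move=> A_le2 aA bA ab cA; case: (c =P a) => [|/eqP ca]; first by left.
case: (c =P b) => [|/eqP cb]; first by right.
suff : 2 < #|A| by rewrite ltnNge A_le2.
by apply/card_gt2P; exists a, b, c; rewrite eq_sym in cb; split; split.
Qed.

Lemma perm_stable_onto (V : finType) (s : {perm V}) (A : {set V}) y :
  {in A, forall x, s x \in A} -> y \in A -> exists2 x, x \in A & s x = y.
Proof.
move=> sA yA; have sAA : s @: A \subset A.
  by apply/subsetP => _ /imsetP[x xA ->]; exact: sA.
have : y \in s @: A.
  move: sAA; rewrite subEproper properEcard (card_imset _ perm_inj) ltnn.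
  by rewrite andbF orbF => /eqP->.
by case/imsetP => x xA ->; exists x.
Qed.

Lemma porbit_card_gt2 (V : finType) (s : {perm V}) x :
  s (s x) != x -> 2 < #|porbit s x|.
Proof.
move=> ssx; have sx : s x != x by apply: contra ssx => /eqP sx; rewrite !sx.
apply/card_gt2P; exists x, (s x), (s (s x)); split; last first.
  by rewrite eq_sym sx (inj_eq perm_inj) eq_sym sx.
split; first exact: porbit_id.
  by have := mem_porbit s 1 x; rewrite expg1.
by have := mem_porbit s 2 x; rewrite expgS expg1 permM.
Qed.

Section Budget.
Variables (m k : nat) (T : 'I_m -> 'I_k -> 'I_(k * m)) (s : {perm 'I_(k * m)}).
Hypothesis connT : graph_connected T s.
Hypothesis m_gt1 : 1 < m.
Hypothesis k_gt0 : 0 < k.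

Lemma mem_rowset i j : T i j \in rowset T i.
Proof. exact: imset_f. Qed.

Lemma rowsetP i x : reflect (exists j, x = T i j) (x \in rowset T i).
Proof. by apply: (iffP imsetP) => [[j _ ->]|[j ->]]; exists j. Qed.

Lemma connection_point_shared i j i' j' :
  i' != i -> T i j = T i' j' -> connection_point T s i j.
Proof.
move=> i'i Tij; apply/orP; right; apply/existsP; exists i'.
by rewrite i'i Tij mem_rowset.
Qed.

Lemma isolated_row_edge i (v w : vert m k) :
  (forall j, ~~ connection_point T s i j) -> graph_edge T s v w -> v.1 = i -> w.1 = i.
Proof.
move=> ncp; case: v => vi vj; case: w => wi wj + /= vi_i; subst vi.
have s_row j : s (T i j) \in rowset T i.
  by move: (ncp j); rewrite negb_or negbK => /andP[].
apply: contraTeq => wi_i.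
rewrite /graph_edge /black_edge /red_edge /solid_edge /dotted_edge /Tv /= eq_sym.
rewrite (negbTE wi_i) /= !negb_or; apply/andP; split.
  by apply: contraNN (ncp vj) => /andP[_ /eqP]; exact: connection_point_shared.
apply/nandP; right; rewrite negb_or; apply/andP; split.
  case/rowsetP: (s_row vj) => j2 ->.
  by apply: contraNN (ncp j2) => /eqP; exact: connection_point_shared.
(* s maps the row into, hence onto, itself: dotted edges cannot enter it. *)
have row_stable : {in rowset T i, forall x, s x \in rowset T i}.
  by move=> _ /rowsetP[j ->]; exact: s_row.
have [_ /rowsetP[j2 ->] sTj2] := perm_stable_onto row_stable (mem_rowset i vj).
apply: contraNN (ncp j2) => /eqP sTw; apply: (connection_point_shared (j' := wj) wi_i).
by apply: (@perm_inj _ s); rewrite sTj2 sTw.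
Qed.

Lemma exists_connection_point i : exists j, connection_point T s i j.
Proof.
apply/existsP; apply: contraT; rewrite negb_exists => /forallP ncp.
pose i0 : 'I_m := Ordinal (ltnW m_gt1); pose i1 : 'I_m := Ordinal m_gt1.
pose i' := if i == i0 then i1 else i0.
have i'i : i' != i by rewrite /i'; case: (i =P i0) => [->|/eqP]; rewrite // eq_sym.
pose j0 := Ordinal k_gt0.
have := connect_forward_closed (P := fun v : vert m k => v.1 == i) _ (connT (i, j0) (i', j0)).
rewrite /= eqxx (negbTE i'i); apply=> // u v uv /eqP ui.
by apply/eqP; exact: isolated_row_edge uv ui.
Qed.

Hypothesis sOn : perm_on (Range T) s.

Lemma Tv_Range v : Tv T v \in Range T.
Proof. exact: imset2_f. Qed.

Lemma moved_Range x : s x != x -> x \in Range T.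
Proof. by move=> mv; apply: (subsetP sOn); rewrite inE. Qed.

Definition active (v : vert m k) : bool :=
  connection_point T s v.1 v.2 || (s (Tv T v) != Tv T v).

Lemma two_le_active_row i : ~ reducible T s -> 1 < #|[set j | active (i, j)]|.
Proof.
move=> nred; rewrite ltnNge; apply/negP => /card_le1_eqP act_eq.
have [j0 cp0] := exists_connection_point i.
have act0 : j0 \in [set j | active (i, j)] by rewrite inE /active cp0.
apply: nred; split=> //; exists i, j0; split=> // [j cpj|_ /rowsetP[j ->] jj0].
  by rewrite (act_eq j0 j) // inE /active cpj.
apply/eqP; apply: contraR jj0 => mv.
by rewrite (act_eq j0 j) // inE /active /Tv /= mv orbT.
Qed.

Lemma card_active_rows :
  #|[set v | active v]| = \sum_(i < m) #|[set j | active (i, j)]|.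
Proof.
transitivity (\sum_(i < m) \sum_(j | active (i, j)) 1).
  by rewrite -sum1dep_card pair_big_dep; apply: eq_bigl => -[i j].
by apply: eq_bigr => i _; rewrite sum1dep_card.
Qed.

Definition occ x := #|[set v : vert m k | Tv T v == x]|.

Definition active_occ x := #|[set v : vert m k | (Tv T v == x) && active v]|.

Lemma sum_by_value (P : pred (vert m k)) (F : vert m k -> nat) :
  \sum_(v | P v) F v = \sum_(x in Range T) \sum_(v | P v && (Tv T v == x)) F v.
Proof. by apply: partition_big => v _; exact: Tv_Range. Qed.

Lemma card_active_by_value :
  #|[set v | active v]| = \sum_(x in Range T) active_occ x.
Proof.
rewrite -sum1dep_card sum_by_value; apply: eq_bigr => x _.
by rewrite sum1dep_card; apply: eq_card => v; rewrite !inE andbC.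
Qed.

Lemma km_by_value : k * m = \sum_(x in Range T) occ x.
Proof.
rewrite -{1}(card_ord k) -{1}(card_ord m) mulnC -card_prod -cardsT -sum1dep_card.
rewrite (sum_by_value xpredT).
by apply: eq_bigr => x _; rewrite sum1dep_card.
Qed.

Lemma amov_by_value : amov s = \sum_(x in Range T) (s x != x).
Proof.
rewrite /amov (@eq_card _ _ [set x | (x \in Range T) && (s x != x)]); last first.
  move=> x; rewrite !inE /=; apply/idP/andP => [mv|[]//].
  by split=> //; exact: moved_Range.
rewrite -sum1dep_card big_mkcondr; apply: eq_bigr => x _; by case: (s x != x).
Qed.

Lemma occ_gt0 x : x \in Range T -> 0 < occ x.
Proof. by case/imset2P => i j _ _ ->; apply/card_gt0P; exists (i, j); rewrite inE. Qed.

Lemma active_occ_le x : active_occ x <= occ x.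
Proof. by apply: subset_leq_card; apply/subsetP => v; rewrite !inE => /andP[]. Qed.

Lemma occ_le1_eq x (v w : vert m k) :
  occ x <= 1 -> Tv T v = x -> Tv T w = x -> v = w.
Proof. by move=> /card_le1_eqP occ1 vx wx; apply/esym/occ1; rewrite inE ?vx ?wx. Qed.

Lemma occ_le2_cases x (u v w : vert m k) : occ x <= 2 ->
  Tv T u = x -> Tv T v = x -> u != v -> Tv T w = x -> w = u \/ w = v.
Proof.
by move=> occ2 ux vx uv wx; apply: (card_le2_mem occ2 _ _ uv); rewrite inE ?ux ?vx ?wx.
Qed.

Lemma active_occ_fixed_single x : occ x <= 1 -> s x = x -> active_occ x = 0.
Proof.
move=> occ1 sx; apply: eq_card0 => -[i j]; rewrite !inE /active /Tv /=.
apply/andP => -[/eqP Tij]; rewrite Tij sx eqxx orbF /connection_point Tij sx.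
case/orP => [|/existsP[i' /andP[i'i /rowsetP[j' Ti'j']]]].
  by rewrite -{1}Tij mem_rowset.
have := occ_le1_eq (v := (i, j)) (w := (i', j')) occ1 Tij (esym Ti'j').
by case=> i'E; rewrite i'E eqxx in i'i.
Qed.

Lemma value_budget x :
  x \in Range T -> active_occ x + 2 <= 2 * occ x + (s x != x).
Proof.
move=> xR; have := occ_gt0 xR; have := active_occ_le x.
case: (s x =P x) => [sx|_] /=; last by lia.
case: (leqP (occ x) 1) => [occ1|]; last by lia.
by rewrite active_occ_fixed_single //; lia.
Qed.

Lemma value_budget_eq x : x \in Range T ->
  active_occ x + 2 = 2 * occ x + (s x != x) -> occ x <= 2 /\ (s x != x -> occ x <= 1).
Proof.
move=> xR; have := occ_gt0 xR; have := active_occ_le x.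
by case: (s x != x) => /=; split=> //; lia.
Qed.

Lemma active_budget : #|[set v | active v]| + 2 * sizeT T <= 2 * (k * m) + amov s
  ?= iff [forall (x | x \in Range T), active_occ x + 2 == 2 * occ x + (s x != x)].
Proof.
have -> : #|[set v | active v]| + 2 * sizeT T = \sum_(x in Range T) (active_occ x + 2).
  by rewrite big_split /= -card_active_by_value sum_nat_const mulnC.
have -> : 2 * (k * m) + amov s = \sum_(x in Range T) (2 * occ x + (s x != x)).
  by rewrite big_split /= -big_distrr /= -km_by_value -amov_by_value.
by apply: leqif_sum => x xR; apply/leqif_eq/value_budget.
Qed.

Lemma card_active_ge : ~ reducible T s -> 2 * m <= #|[set v | active v]|.
Proof.
move=> nred; rewrite card_active_rows; apply: (@leq_trans (\sum_(i < m) 2)).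
  by rewrite sum_nat_const card_ord mulnC.
by apply: leq_sum => i _; exact: two_le_active_row.
Qed.

Lemma excess_ge : ~ reducible T s -> 2 * m + 2 * sizeT T <= 2 * (k * m) + amov s.
Proof. by move=> nred; have := card_active_ge nred; have [+ _] := active_budget; lia. Qed.

Lemma excess_tight : ~ reducible T s ->
  2 * (k * m) + amov s = 2 * sizeT T + 2 * m ->
  [/\ forall i, #|[set j | active (i, j)]| = 2,
      forall x, x \in Range T -> occ x <= 2 &
      forall x, s x != x -> occ x <= 1].
Proof.
move=> nred tight; have act_ge := card_active_ge nred.
have [budget_le budget_eqE] := active_budget.
have act_eq : #|[set v | active v]| = 2 * m by lia.
have /forall_inP value_eq :
    [forall (x | x \in Range T), active_occ x + 2 == 2 * occ x + (s x != x)].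
  by rewrite -budget_eqE; apply/eqP; lia.
split=> [i|x xR|x mv].
- have [_] := leqif_sum (fun i (_ : true) => leqif_eq (two_le_active_row i nred)).
  rewrite -card_active_rows act_eq sum_nat_const card_ord mulnC eqxx.
  by move=> /esym/forallP/(_ i)/eqP.
- by have [] := value_budget_eq xR (eqP (value_eq x xR)).
- have xR := moved_Range mv.
  by have [_] := value_budget_eq xR (eqP (value_eq x xR)); apply.
Qed.

Lemma outer_red_single i j (w0 : vert m k) :
  w0.1 != i -> (forall w, red_edge T s (i, j) w = (w == w0)) -> outer_red T s i j.
Proof.
move=> w0i red_w0; apply/andP; split.
  by apply/eqP; rewrite /red_deg -(cards1 w0); apply: eq_card => w; rewrite !inE red_w0.
by apply/forallP => w; rewrite red_w0; apply/implyP => /eqP ->.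
Qed.

Section Tight.
Hypothesis rowI : row_inj T.
Hypothesis s_invol : involutive s.
Hypothesis active_row2 : forall i, #|[set j | active (i, j)]| = 2.
Hypothesis occ_le2 : forall x, x \in Range T -> occ x <= 2.
Hypothesis moved_occ_le1 : forall x, s x != x -> occ x <= 1.

(* If T_{i,j} is moved inside row i, then so is its image T_{i,j2}: these two
   are the active vertices of the row, and neither can be a connection point. *)
Lemma active_connection_point i j : active (i, j) -> connection_point T s i j.
Proof.
case/orP => [//|mv]; apply: contraT => ncp; rewrite /Tv /= in mv.
have /rowsetP[j2 sTij] : s (T i j) \in rowset T i.
  by move: ncp; rewrite negb_or negbK => /andP[].
have jj2 : j != j2 by apply: contraNneq mv => jE; rewrite sTij jE.
have act_j : j \in [set j | active (i, j)] by rewrite inE /active /Tv /= mv orbT.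
have act_j2 : j2 \in [set j | active (i, j)].
  by rewrite inE /active /Tv /= -sTij s_invol (eq_sym (T i j)) mv orbT.
have [j3 cp3] := exists_connection_point i.
have act_j3 : j3 \in [set j | active (i, j)] by rewrite inE /active cp3.
have [j3E|j3E] := card_le2_mem (eq_leq (active_row2 i)) act_j act_j2 jj2 act_j3.
  by rewrite -j3E cp3 in ncp.
move: cp3; rewrite j3E /connection_point -sTij s_invol mem_rowset /=.
case/existsP => i' /andP[i'i /rowsetP[j' Ti'j']].
have smv : s (s (T i j)) != s (T i j) by rewrite s_invol eq_sym.
have := occ_le1_eq (v := (i, j2)) (w := (i', j')) (moved_occ_le1 smv) (esym sTij).
by move=> /(_ (esym Ti'j')) [i'E _]; rewrite i'E eqxx in i'i.
Qed.

Lemma inactive_red_free i j : ~~ active (i, j) -> red_deg T s (i, j) = 0.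
Proof.
rewrite /active /Tv negb_or negbK => /andP[ncp /eqP sx].
apply: eq_card0 => -[wi wj]; rewrite !inE /red_edge /solid_edge /dotted_edge /Tv /= sx.
apply/norP; split.
  apply/andP => -[vw /eqP Tw]; case: (wi =P i) => [wi_i|/eqP wi_i].
    by subst wi; move: vw; rewrite (rowI Tw) eqxx.
  by rewrite (connection_point_shared wi_i Tw) in ncp.
apply/andP => -[Tvw /orP[/eqP Tw|/eqP sTw]]; first by rewrite Tw eqxx in Tvw.
by move: Tvw; rewrite -sx in sTw; rewrite (perm_inj sTw) eqxx.
Qed.

Lemma shared_outer_red i j i' j' : i' != i -> T i j = T i' j' -> outer_red T s i j.
Proof.
move=> i'i Tij; apply: (outer_red_single (w0 := (i', j'))) => // -[wi wj].
have sx : s (T i j) = T i j.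
  apply/eqP; apply: contraT => mv.
  have := occ_le1_eq (v := (i, j)) (w := (i', j')) (moved_occ_le1 mv) erefl (esym Tij).
  by case=> i'E _; rewrite i'E eqxx in i'i.
have ij_i'j' : (i, j) != (i', j') by apply: contraNneq i'i => -[->].
rewrite /red_edge /solid_edge /dotted_edge /Tv /= sx.
apply/idP/eqP => [|[-> ->]]; last by rewrite ij_i'j' Tij eqxx.
case/orP => [/andP[vw /eqP Tw]|/andP[Tvw /orP[/eqP Tw|/eqP sTw]]].
- have occ2 : occ (T i j) <= 2 := occ_le2 (Tv_Range (i, j)).
  have [wE|//] := occ_le2_cases (u := (i, j)) (v := (i', j')) (w := (wi, wj))
    occ2 erefl (esym Tij) ij_i'j' (esym Tw).
  by rewrite wE eqxx in vw.
- by rewrite Tw eqxx in Tvw.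
- by move: Tvw; rewrite -sx in sTw; rewrite (perm_inj sTw) eqxx.
Qed.

Lemma escaping_outer_red i j : s (T i j) \notin rowset T i -> outer_red T s i j.
Proof.
move=> sx_out.
have mv : s (T i j) != T i j by apply: contraNneq sx_out => ->; exact: mem_rowset.
have smv : s (s (T i j)) != s (T i j) by rewrite s_invol eq_sym.
have /imset2P[i2 j2 _ _ sx] := moved_Range smv.
apply: (outer_red_single (w0 := (i2, j2))).
  by apply: contraNneq sx_out => /= i2E; rewrite sx i2E mem_rowset.
move=> [wi wj]; rewrite /red_edge /solid_edge /dotted_edge /Tv /=.
apply/idP/eqP => [|[-> ->]]; last by rewrite -sx eqxx /= andbT (eq_sym (T i j)) mv orbT.
have sx_only w : Tv T w = s (T i j) -> w = (i2, j2).
  by move=> wsx; apply: (occ_le1_eq (w := (i2, j2)) (moved_occ_le1 smv) wsx (esym sx)).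
case/orP => [/andP[vw /eqP Tw]|/andP[_ /orP[/eqP sTij|/eqP sTw]]].
- have := occ_le1_eq (v := (i, j)) (w := (wi, wj)) (moved_occ_le1 mv) erefl (esym Tw).
  by move=> wE; rewrite wE eqxx in vw.
- exact: (sx_only (wi, wj) (esym sTij)).
- by apply: (sx_only (wi, wj)); rewrite /Tv /= -sTw s_invol.
Qed.

Lemma connection_point_outer_red i j : connection_point T s i j -> outer_red T s i j.
Proof.
case/orP => [|/existsP[i' /andP[i'i /rowsetP[j' Tij]]]]; first exact: escaping_outer_red.
exact: shared_outer_red i'i Tij.
Qed.

Lemma circle_like_of_tight : irreducible T s -> circle_like T s.
Proof.
move=> irr; split=> // i.
have outer_active j : outer_red T s i j = active (i, j).
  apply/idP/idP => [/andP[/eqP deg1 _]|/active_connection_point/connection_point_outer_red //].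
  by apply: contraT => /inactive_red_free; rewrite deg1.
split=> [|j]; first by rewrite -(active_row2 i); apply: eq_card => j; rewrite !inE outer_active.
by rewrite outer_active; exact: inactive_red_free.
Qed.

End Tight.

End Budget.

Import GRing.Theory Num.Theory.
Local Open Scope ring_scope.

Lemma nat_half_ler (R : realFieldType) (K n a M : nat) :
  (2 * M + 2 * n <= 2 * K + a)%N -> M%:R <= K%:R - n%:R + a%:R / 2 :> R.
Proof. by rewrite -(ler_nat R) !natrD => ?; lra. Qed.

Lemma nat_half_eq (R : realFieldType) (K n a M : nat) :
  K%:R - n%:R + a%:R / 2 = M%:R :> R -> (2 * K + a = 2 * n + 2 * M)%N.
Proof. by move=> h; apply/eqP; rewrite -(eqr_nat R) !natrD; apply/eqP; lra. Qed.

Theorem mainTheorem14 (m k : nat) (T : 'I_m -> 'I_k -> 'I_(k * m))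
  (s : {perm 'I_(k * m)}) :
  (2 <= m)%N -> (2 <= k)%N -> inC T s ->
  (irreducible T s ->
     ((k * m)%:R - (sizeT T)%:R + (amov s)%:R / 2 >= (m%:R : rat))) /\
  (irreducible T s -> ~ circle_like T s ->
     (k * m)%:R - (sizeT T)%:R + (amov s)%:R / 2 = (m%:R : rat) ->
     exists x : 'I_(k * m), (3 <= #|porbit s x|)%N).
Proof.
move=> m_gt1 k_gt1 [rowI [sOn connT]]; have k_gt0 := ltnW k_gt1.
split=> [[_ nred]|irr not_circle /nat_half_eq tight].
  exact/nat_half_ler/excess_ge.
have [x long|no_long] := pickP (fun x => 2 < #|porbit s x|)%N; first by exists x.
have s_invol : involutive s.
  by move=> x; apply/eqP; apply: contraT => /porbit_card_gt2; rewrite no_long.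
have [row2 occ_le2 moved_occ_le1] := excess_tight connT m_gt1 k_gt0 sOn irr.2 tight.
by case: not_circle; exact: circle_like_of_tight.
Qed.
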